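(* Let $v_1,v_2,\rho_1,\rho_2$ be strictly positive reals, define $V(R)=(\rho_1+\rho_2R)\big(v_1+\frac{v_2}{R}\big)$ for $R>0$, let $R^*=\sqrt{\frac{\rho_1 v_2}{\rho_2 v_1}}$ and $\gamma^*=V(R^* )/V(1)$. Suppose $R^*>1$ and $\alpha^{-1}R^*\le R\le\alpha R^*$ for some $\alpha>1$. Then \[ \frac{V(R)}{V(R^* )}\le\frac12+\frac{\alpha+\alpha^{-1}}{4},\qquad\text{and thus}\qquad \frac{V(R)}{V(1)}\le\Big(\frac12+\frac{\alpha+\alpha^{-1}}{4}\Big)\gamma^*. \]
   Context: Interpretation: for a nested conditional Monte Carlo estimator with $N$ outer paths and $R$ inner replications per path, with variance $\frac{v_1}{N}+\frac{v_2}{RN}$ and expected cost $N\rho_1+NR\rho_2$, at a fixed budget $C$ fully used the variance is $V(R)/C$; $R^*$ is the optimal number of inner replications (when $R^*>1$) and $R=1$ corresponds to simple Monte Carlo. *)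

From Stdlib Require Import Reals.
Open Scope R_scope.

Definition Vcost (v1 v2 rho1 rho2 r : R) : R :=
  (rho1 + rho2 * r) * (v1 + v2 / r).

Definition Ropt (v1 v2 rho1 rho2 : R) : R :=
  sqrt ((rho1 * v2) / (rho2 * v1)).

Definition gamma_opt (v1 v2 rho1 rho2 : R) : R :=
  Vcost v1 v2 rho1 rho2 (Ropt v1 v2 rho1 rho2) / Vcost v1 v2 rho1 rho2 1.

(* With [s = R*] and [c = rho2 v1 s], the identity [rho2 v1 s^2 = rho1 v2] gives
   [V(r) = A + c (r/s + s/r)] where [A = rho1 v1 + rho2 v2], so [V(s) = A + 2c].
   By AM-GM [c = sqrt (rho1 v1 rho2 v2) <= A / 2], and the ratio [(A + c x) / (A + 2c)]
   with [x >= 2] is largest when [A] is smallest, i.e. at most [1/2 + x/4].  Finally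
   [x = t + 1/t] with [t = r/s] in [[1/alpha, alpha]] is at most [alpha + 1/alpha]. *)
From Stdlib Require Import Reals Lra Psatz.
Open Scope R_scope.

Lemma Rplus_inv_ge_2 (t : R) : 0 < t -> 2 <= t + / t.
Proof.
  intros ht.
  assert (Heq : t + / t - 2 = (t - 1) * (t - 1) / t) by (field; lra).
  assert (0 <= (t - 1) * (t - 1) / t).
  { apply Rle_mult_inv_pos; [apply Rle_0_sqr | exact ht]. }
  lra.
Qed.

Lemma Rplus_inv_le_bound (a t : R) :
  0 < t -> / a <= t <= a -> t + / t <= a + / a.
Proof.
  intros ht [hlo hhi].
  assert (ha : 0 < a) by lra.
  assert (Heq : t + / t - (a + / a) = (t - a) * (t - / a) / t) by (field; lra).
  assert ((t - a) * (t - / a) / t <= 0).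
  { assert (hprod : (t - a) * (t - / a) <= 0) by nra.
    unfold Rdiv. assert (0 < / t) by (apply Rinv_0_lt_compat; exact ht). nra. }
  lra.
Qed.

Lemma AM_GM_sqr (p q c : R) : 0 <= p -> 0 <= q -> 0 <= c -> c * c = p * q -> 2 * c <= p + q.
Proof.
  intros hp hq hc hcc.
  assert (Hsq : (p + q) * (p + q) - (2 * c) * (2 * c) = (p - q) * (p - q)) by nra.
  destruct (Rle_lt_dec (2 * c) (p + q)) as [Hle | Hlt]; [exact Hle|].
  assert ((p + q) * (p + q) < (2 * c) * (2 * c)) by (apply Rmult_le_0_lt_compat; lra).
  pose proof (Rle_0_sqr (p - q)). unfold Rsqr in *. lra.
Qed.

Lemma ratio_affine_le (A c x : R) :
  0 < c -> 2 * c <= A -> 2 <= x -> (A + c * x) / (A + 2 * c) <= 1 / 2 + x / 4.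
Proof.
  intros hc hA hx.
  assert (Heq : 1 / 2 + x / 4 - (A + c * x) / (A + 2 * c)
                = (A - 2 * c) * (x - 2) / (4 * (A + 2 * c))) by (field; lra).
  assert (0 <= (A - 2 * c) * (x - 2) / (4 * (A + 2 * c))).
  { apply Rle_mult_inv_pos; nra. }
  lra.
Qed.

Lemma Vcost_pos (v1 v2 rho1 rho2 r : R) :
  0 < v1 -> 0 < v2 -> 0 < rho1 -> 0 < rho2 -> 0 < r -> 0 < Vcost v1 v2 rho1 rho2 r.
Proof.
  intros. unfold Vcost.
  assert (0 < v2 / r) by (apply Rdiv_lt_0_compat; assumption).
  apply Rmult_lt_0_compat; nra.
Qed.

Lemma Ropt_pos (v1 v2 rho1 rho2 : R) :
  0 < v1 -> 0 < v2 -> 0 < rho1 -> 0 < rho2 -> 0 < Ropt v1 v2 rho1 rho2.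
Proof.
  intros. unfold Ropt. apply sqrt_lt_R0, Rdiv_lt_0_compat; nra.
Qed.

Lemma Ropt_sqr (v1 v2 rho1 rho2 : R) :
  0 < v1 -> 0 < v2 -> 0 < rho1 -> 0 < rho2 ->
  rho2 * v1 * (Ropt v1 v2 rho1 rho2 * Ropt v1 v2 rho1 rho2) = rho1 * v2.
Proof.
  intros. unfold Ropt. rewrite sqrt_sqrt.
  - field. lra.
  - apply Rle_mult_inv_pos; nra.
Qed.

Lemma Vcost_balanced (v1 v2 rho1 rho2 s r : R) :
  0 < rho1 -> 0 < s -> 0 < r -> rho2 * v1 * (s * s) = rho1 * v2 ->
  Vcost v1 v2 rho1 rho2 r
    = rho1 * v1 + rho2 * v2 + rho2 * v1 * s * (r / s + / (r / s)).
Proof.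
  intros hrho1 hs hr hss. unfold Vcost.
  replace v2 with (rho2 * v1 * (s * s) / rho1) by (rewrite hss; field; lra).
  field. lra.
Qed.

Lemma Vcost_ratio_Ropt_le (v1 v2 rho1 rho2 alpha r : R) :
  0 < v1 -> 0 < v2 -> 0 < rho1 -> 0 < rho2 -> 1 < alpha ->
  / alpha * Ropt v1 v2 rho1 rho2 <= r <= alpha * Ropt v1 v2 rho1 rho2 ->
  Vcost v1 v2 rho1 rho2 r / Vcost v1 v2 rho1 rho2 (Ropt v1 v2 rho1 rho2)
    <= 1 / 2 + (alpha + / alpha) / 4.
Proof.
  intros h1 h2 h3 h4 ha [hlo hhi].
  set (s := Ropt v1 v2 rho1 rho2) in *.
  assert (hs : 0 < s) by (apply Ropt_pos; assumption).
  assert (hss : rho2 * v1 * (s * s) = rho1 * v2) by (apply Ropt_sqr; assumption).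
  assert (hr : 0 < r).
  { apply Rlt_le_trans with (/ alpha * s); [|exact hlo].
    apply Rmult_lt_0_compat; [apply Rinv_0_lt_compat; lra | exact hs]. }
  set (t := r / s).
  assert (ht : 0 < t) by (apply Rdiv_lt_0_compat; assumption).
  assert (ht_range : / alpha <= t <= alpha).
  { unfold t. split.
    - apply Rmult_le_reg_r with s; [exact hs|]. field_simplify; lra.
    - apply Rmult_le_reg_r with s; [exact hs|]. field_simplify; lra. }
  assert (hs1 : s / s + / (s / s) = 2) by (field; lra).
  rewrite (Vcost_balanced v1 v2 rho1 rho2 s r), (Vcost_balanced v1 v2 rho1 rho2 s s), hs1
    by assumption.
  fold t.
  set (c := rho2 * v1 * s).
  assert (hc : 0 < c) by (unfold c; apply Rmult_lt_0_compat; nra).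
  assert (hA : 2 * c <= rho1 * v1 + rho2 * v2).
  { apply AM_GM_sqr; try nra.
    unfold c. replace (rho2 * v1 * s * (rho2 * v1 * s)) with (rho2 * v1 * (rho2 * v1 * (s * s)))
      by ring.
    rewrite hss. ring. }
  apply Rle_trans with (1 / 2 + (t + / t) / 4).
  - replace (c * 2) with (2 * c) by ring. apply ratio_affine_le; [exact hc | lra | apply Rplus_inv_ge_2, ht].
  - pose proof (Rplus_inv_le_bound alpha t ht ht_range). lra.
Qed.

Theorem proposition4 (v1 v2 rho1 rho2 alpha r : R) :
  0 < v1 -> 0 < v2 -> 0 < rho1 -> 0 < rho2 ->
  1 < Ropt v1 v2 rho1 rho2 ->
  1 < alpha ->
  / alpha * Ropt v1 v2 rho1 rho2 <= r <= alpha * Ropt v1 v2 rho1 rho2 ->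
  Vcost v1 v2 rho1 rho2 r / Vcost v1 v2 rho1 rho2 (Ropt v1 v2 rho1 rho2)
    <= 1 / 2 + (alpha + / alpha) / 4
  /\
  Vcost v1 v2 rho1 rho2 r / Vcost v1 v2 rho1 rho2 1
    <= (1 / 2 + (alpha + / alpha) / 4) * gamma_opt v1 v2 rho1 rho2.
Proof.
  (* [R* > 1] only matters for the interpretation (simple Monte Carlo is suboptimal). *)
  intros h1 h2 h3 h4 _ ha hr.
  pose proof (Vcost_ratio_Ropt_le v1 v2 rho1 rho2 alpha r h1 h2 h3 h4 ha hr) as K.
  split; [exact K|].
  unfold gamma_opt.
  set (s := Ropt v1 v2 rho1 rho2) in *.
  assert (P1 : 0 < Vcost v1 v2 rho1 rho2 1) by (apply Vcost_pos; lra).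
  assert (Ps : 0 < Vcost v1 v2 rho1 rho2 s) by (apply Vcost_pos, Ropt_pos; assumption).
  replace (Vcost v1 v2 rho1 rho2 r / Vcost v1 v2 rho1 rho2 1) with
    (Vcost v1 v2 rho1 rho2 r / Vcost v1 v2 rho1 rho2 s *
      (Vcost v1 v2 rho1 rho2 s / Vcost v1 v2 rho1 rho2 1)) by (field; lra).
  apply Rmult_le_compat_r; [|exact K].
  left; apply Rdiv_lt_0_compat; assumption.
Qed.
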